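(* Let $(V,\|\cdot\|,V_+)$ be a normal ordered vector space and let $d=d_V$. Then $d$ is a proper gauge on $V$ (so $(V,d)$ is a gauged space), and the normed ordered vector space induced by $d$ is exactly $(V,\|\cdot\|,V_+)$; that is, $V_+=\{x\in V:\ d(-x)=0\}$ and $\|x\|=\max\{d(x),d(-x)\}$ for all $x\in V$.
   Context: A normed ordered vector space $(V,\|\cdot\|,V_+)$ is a real normed vector space $V$ together with a closed proper cone $V_+$ (i.e. $V_+$ is closed under addition and multiplication by nonnegative scalars, and $V_+\cap(-V_+)=\{0\}$); write $x\le y$ iff $y-x\in V_+$. It is called normal if $x\le y\le z$ implies $\|y\|\le\max\{\|x\|,\|z\|\}$. A gauge on a real vector space $V$ is a map $\nu:V\to[0,\infty)$ with $\nu(x+y)\le\nu(x)+\nu(y)$ and $\nu(tx)=t\nu(x)$ for all $x,y\in V$, $t>0$; its conjugate is $\overline{\nu}(x)=\nu(-x)$. A gauge is proper if for every $x\neq 0$, $\nu(x)\ne 0$ or $\overline{\nu}(x)\neq 0$; a gauged space is a pair $(V,\nu)$ with $\nu$ a proper gauge. The normed ordered vector space induced by a gauge $\nu$ is $(V,\|\cdot\|_\nu,V_{+,\nu})$ with $\|x\|_\nu=\max\{\nu(x),\overline{\nu}(x)\}$ and $V_{+,\nu}=\ker\overline{\nu}=\{x:\nu(-x)=0\}$. For a normed ordered vector space, $d_V(x)=\inf\{\|x+p\|:p\in V_+\}$ (the distance from $x$ to $-V_+$). *)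

From Stdlib Require Import Reals ClassicalEpsilon.
Open Scope R_scope.

Record NormedSpace := {
  carrier :> Type;
  vzero : carrier;
  vadd : carrier -> carrier -> carrier;
  vopp : carrier -> carrier;
  vscal : R -> carrier -> carrier;
  vnorm : carrier -> R;
  vaddA : forall x y z, vadd x (vadd y z) = vadd (vadd x y) z;
  vaddC : forall x y, vadd x y = vadd y x;
  vadd0 : forall x, vadd x vzero = x;
  vaddN : forall x, vadd x (vopp x) = vzero;
  vscalA : forall a b x, vscal a (vscal b x) = vscal (a * b) x;
  vscal1 : forall x, vscal 1 x = x;
  vscalDr : forall a x y, vscal a (vadd x y) = vadd (vscal a x) (vscal a y);
  vscalDl : forall a b x, vscal (a + b) x = vadd (vscal a x) (vscal b x);
  vnorm_eq0 : forall x, vnorm x = 0 -> x = vzero;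
  vnorm_scal : forall a x, vnorm (vscal a x) = Rabs a * vnorm x;
  vnorm_triangle : forall x y, vnorm (vadd x y) <= vnorm x + vnorm y
}.

Arguments vzero {n}.
Arguments vadd {n}.
Arguments vopp {n}.
Arguments vscal {n}.
Arguments vnorm {n}.

Definition norm_closed (V : NormedSpace) (S : V -> Prop) : Prop :=
  forall (u : nat -> V) (x : V), (forall n, S (u n)) ->
    Un_cv (fun n => vnorm (vadd (u n) (vopp x))) 0 -> S x.

Definition closed_proper_cone (V : NormedSpace) (Vp : V -> Prop) : Prop :=
  (exists x, Vp x) /\
  (forall x y, Vp x -> Vp y -> Vp (vadd x y)) /\
  (forall (t : R) x, 0 <= t -> Vp x -> Vp (vscal t x)) /\
  (forall x, Vp x -> Vp (vopp x) -> x = vzero) /\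
  norm_closed V Vp.

Definition cone_le (V : NormedSpace) (Vp : V -> Prop) (x y : V) : Prop :=
  Vp (vadd y (vopp x)).

Definition normal_cone (V : NormedSpace) (Vp : V -> Prop) : Prop :=
  forall x y z, cone_le V Vp x y -> cone_le V Vp y z ->
    vnorm y <= Rmax (vnorm x) (vnorm z).

Definition is_gauge (V : NormedSpace) (nu : V -> R) : Prop :=
  (forall x, 0 <= nu x) /\
  (forall x y, nu (vadd x y) <= nu x + nu y) /\
  (forall (t : R) x, 0 < t -> nu (vscal t x) = t * nu x).

Definition conj_gauge (V : NormedSpace) (nu : V -> R) (x : V) : R := nu (vopp x).

Definition proper_gauge (V : NormedSpace) (nu : V -> R) : Prop :=
  is_gauge V nu /\
  forall x, x <> vzero -> nu x <> 0 \/ conj_gauge V nu x <> 0.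

Definition gauge_norm (V : NormedSpace) (nu : V -> R) (x : V) : R :=
  Rmax (nu x) (conj_gauge V nu x).
Definition gauge_cone (V : NormedSpace) (nu : V -> R) (x : V) : Prop :=
  conj_gauge V nu x = 0.

(* infimum of a set of reals (greatest lower bound; 0 if none exists) *)
Definition is_glb (E : R -> Prop) (m : R) : Prop :=
  (forall r, E r -> m <= r) /\ (forall b, (forall r, E r -> b <= r) -> b <= m).

Definition Rinf (E : R -> Prop) : R :=
  epsilon (inhabits 0) (fun m => is_glb E m).

Definition dV (V : NormedSpace) (Vp : V -> Prop) (x : V) : R :=
  Rinf (fun r => exists p, Vp p /\ r = vnorm (vadd x p)).

(* Subadditivity and positive homogeneity of d are inherited from the norm
   because V_+ is a convex cone.  For the norm identity, pick p, q in V_+ with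
   |x + p| and |-x + q| close to d(x) and d(-x); then x - q <= x <= x + p, so
   normality bounds |x| by max(d(x), d(-x)), the reverse bound coming from
   p = 0.  Properness follows from the norm identity, and d(-x) = 0 places x in
   the closure of V_+, which is V_+ itself. *)

From Stdlib Require Import Reals Lra Lia ClassicalEpsilon.
Open Scope R_scope.

Section VectorSpace.
Variable V : NormedSpace.

Lemma vadd0l (x : V) : vadd vzero x = x.
Proof. rewrite vaddC; apply vadd0. Qed.

Lemma vaddNl (x : V) : vadd (vopp x) x = vzero.
Proof. rewrite vaddC; apply vaddN. Qed.

Lemma vaddI (a b c : V) : vadd a b = vadd a c -> b = c.
Proof.
  intro H.
  rewrite <- (vadd0l b), <- (vadd0l c), <- (vaddNl a), <- !vaddA, H.
  reflexivity.
Qed.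

Lemma vopp_unique (x y : V) : vadd x y = vzero -> y = vopp x.
Proof. intro H; apply (vaddI x); rewrite H, vaddN; reflexivity. Qed.

Lemma vscal0 (x : V) : vscal 0 x = vzero.
Proof.
  apply (vaddI (vscal 0 x)); rewrite vadd0, <- vscalDl.
  f_equal; ring.
Qed.

Lemma vscalN1 (x : V) : vscal (-1) x = vopp x.
Proof.
  apply vopp_unique.
  rewrite <- (vscal1 _ x) at 1; rewrite <- vscalDl.
  replace (1 + -1) with 0 by ring; apply vscal0.
Qed.

Lemma voppK (x : V) : vopp (vopp x) = x.
Proof. symmetry; apply vopp_unique, vaddNl. Qed.

Lemma voppD (x y : V) : vopp (vadd x y) = vadd (vopp x) (vopp y).
Proof.
  symmetry; apply vopp_unique.
  rewrite (vaddC _ (vopp x)), vaddA, <- (vaddA _ x y), vaddN, vadd0, vaddN.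
  reflexivity.
Qed.

Lemma vnorm0 : vnorm (@vzero V) = 0.
Proof. rewrite <- (vscal0 vzero), vnorm_scal, Rabs_R0; ring. Qed.

Lemma vnorm_opp (x : V) : vnorm (vopp x) = vnorm x.
Proof.
  rewrite <- vscalN1, vnorm_scal, Rabs_left by lra; ring.
Qed.

Lemma vnorm_ge0 (x : V) : 0 <= vnorm x.
Proof.
  pose proof (vnorm_triangle _ x (vopp x)) as H.
  rewrite vaddN, vnorm0, vnorm_opp in H; lra.
Qed.

Lemma norm_closed_approx (A : V -> Prop) (x : V) : norm_closed V A ->
  (forall eps, 0 < eps -> exists p, A p /\ vnorm (vadd p (vopp x)) < eps) ->
  A x.
Proof.
  intros HA Happrox.
  assert (Hseq : forall n : nat,
    exists p, A p /\ vnorm (vadd p (vopp x)) < / INR (S n)).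
  { intro n; apply Happrox, Rinv_0_lt_compat, lt_0_INR; lia. }
  destruct (choice _ Hseq) as [u Hu].
  apply (HA u x); [intro n; apply (Hu n)|].
  intros eps Heps.
  destruct (archimed_cor1 eps Heps) as [N [HN HN0]].
  exists N; intros n Hn.
  unfold R_dist; rewrite Rminus_0_r, Rabs_right by apply Rle_ge, vnorm_ge0.
  apply Rlt_trans with (/ INR (S n)); [apply Hu|].
  apply Rle_lt_trans with (/ INR N); [|exact HN].
  apply Rinv_le_contravar; [apply lt_0_INR; lia | apply le_INR; lia].
Qed.

End VectorSpace.

Lemma Rinf_glb (E : R -> Prop) :
  (exists r, E r) -> (exists b, forall r, E r -> b <= r) -> is_glb E (Rinf E).
Proof.
  intros [r Hr] [b Hb].
  unfold Rinf; apply epsilon_spec.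
  destruct (completeness (fun y => E (- y))) as [m [Hub Hleast]].
  - exists (- b); intros y Hy; apply Hb in Hy; lra.
  - exists (- r); rewrite Ropp_involutive; exact Hr.
  - exists (- m); split.
    + intros s Hs.
      rewrite <- (Ropp_involutive s) in Hs; apply Hub in Hs; lra.
    + intros c Hc.
      enough (m <= - c) by lra.
      apply Hleast; intros y Hy; apply Hc in Hy; lra.
Qed.

Lemma glb_approx (E : R -> Prop) (m eps : R) :
  is_glb E m -> 0 < eps -> exists r, E r /\ r < m + eps.
Proof.
  intros [_ Hgreatest] Heps.
  apply not_all_not_ex; intro Hnone.
  enough (m + eps <= m) by lra.
  apply Hgreatest; intros r Hr.
  apply Rnot_lt_le; intro Hlt; apply (Hnone r); auto.
Qed.

Section ConeDistance.
Variable V : NormedSpace.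
Variable Vp : V -> Prop.
Hypothesis Hcone : closed_proper_cone V Vp.

Let d := dV V Vp.

Lemma cone0 : Vp vzero.
Proof.
  destruct Hcone as [[x Hx] [_ [Hscal _]]].
  rewrite <- (vscal0 V x); apply Hscal; [lra | exact Hx].
Qed.

Lemma dV_glb (x : V) :
  is_glb (fun r => exists p, Vp p /\ r = vnorm (vadd x p)) (d x).
Proof.
  apply Rinf_glb.
  - exists (vnorm (vadd x vzero)), vzero; split; [apply cone0 | reflexivity].
  - exists 0; intros r [p [_ ->]]; apply vnorm_ge0.
Qed.

Lemma dV_le (x p : V) : Vp p -> d x <= vnorm (vadd x p).
Proof. intro Hp; apply (proj1 (dV_glb x)); eauto. Qed.

Lemma dV_le_norm (x : V) : d x <= vnorm x.
Proof. rewrite <- (vadd0 _ x) at 2; apply dV_le, cone0. Qed.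

Lemma dV_ge0 (x : V) : 0 <= d x.
Proof. apply (proj2 (dV_glb x)); intros r [p [_ ->]]; apply vnorm_ge0. Qed.

Lemma dV_approx (x : V) (eps : R) : 0 < eps ->
  exists p, Vp p /\ vnorm (vadd x p) < d x + eps.
Proof.
  intro Heps.
  destruct (glb_approx _ _ _ (dV_glb x) Heps) as [r [[p [Hp ->]] Hr]].
  eauto.
Qed.

Lemma dV_add (x y : V) : d (vadd x y) <= d x + d y.
Proof.
  apply le_epsilon; intros eps Heps.
  destruct (dV_approx x (eps / 2)) as [p [Hp Hxp]]; [lra|].
  destruct (dV_approx y (eps / 2)) as [q [Hq Hyq]]; [lra|].
  destruct Hcone as [_ [Hadd _]].
  pose proof (dV_le (vadd x y) (vadd p q) (Hadd _ _ Hp Hq)) as H.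
  replace (vadd (vadd x y) (vadd p q)) with (vadd (vadd x p) (vadd y q)) in H
    by (rewrite !vaddA; f_equal; rewrite <- !vaddA; f_equal; apply vaddC).
  pose proof (vnorm_triangle _ (vadd x p) (vadd y q)); lra.
Qed.

Lemma dV_scal_le (t : R) (x : V) : 0 < t -> d (vscal t x) <= t * d x.
Proof.
  intro Ht; apply le_epsilon; intros eps Heps.
  destruct (dV_approx x (eps / t)) as [p [Hp Hxp]];
    [apply Rdiv_lt_0_compat; lra|].
  destruct Hcone as [_ [_ [Hscal _]]].
  pose proof (dV_le (vscal t x) (vscal t p) (Hscal t p (Rlt_le _ _ Ht) Hp)) as H.
  rewrite <- vscalDr, vnorm_scal, Rabs_right in H by lra.
  apply Rmult_lt_compat_l with (r := t) in Hxp; [|exact Ht].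
  replace (t * (d x + eps / t)) with (t * d x + eps) in Hxp by (field; lra).
  lra.
Qed.

Lemma dV_scal (t : R) (x : V) : 0 < t -> d (vscal t x) = t * d x.
Proof.
  intro Ht; apply Rle_antisym; [apply dV_scal_le; exact Ht|].
  pose proof (dV_scal_le (/ t) (vscal t x) (Rinv_0_lt_compat _ Ht)) as H.
  rewrite vscalA, Rinv_l, vscal1 in H by lra.
  apply Rmult_le_compat_l with (r := t) in H; [|lra].
  rewrite <- Rmult_assoc, Rinv_r, Rmult_1_l in H by lra; exact H.
Qed.

Lemma dV_gauge : is_gauge V d.
Proof. split; [exact dV_ge0 | split; [exact dV_add | exact dV_scal]]. Qed.

Lemma dV_opp_eq0 (x : V) : Vp x <-> d (vopp x) = 0.
Proof.
  split.
  - intro Hx; apply Rle_antisym; [|apply dV_ge0].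
    pose proof (dV_le (vopp x) x Hx) as H.
    rewrite vaddNl, vnorm0 in H; exact H.
  - intro Hd.
    apply (norm_closed_approx V Vp x (proj2 (proj2 (proj2 (proj2 Hcone))))).
    intros eps Heps.
    destruct (dV_approx (vopp x) eps Heps) as [p [Hp H]].
    exists p; split; [exact Hp|].
    rewrite vaddC; lra.
Qed.

Hypothesis Hnormal : normal_cone V Vp.

Lemma vnorm_max_dV (x : V) : vnorm x = Rmax (d x) (d (vopp x)).
Proof.
  apply Rle_antisym.
  - apply le_epsilon; intros eps Heps.
    destruct (dV_approx x eps Heps) as [p [Hp Hxp]].
    destruct (dV_approx (vopp x) eps Heps) as [q [Hq Hxq]].
    assert (Hlow : cone_le V Vp (vadd x (vopp q)) x).
    { unfold cone_le; rewrite voppD, voppK, vaddA, vaddN, vadd0l; exact Hq. }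
    assert (Hup : cone_le V Vp x (vadd x p)).
    { unfold cone_le; rewrite (vaddC _ x p), <- vaddA, vaddN, vadd0; exact Hp. }
    pose proof (Hnormal _ _ _ Hlow Hup) as H.
    rewrite <- (vnorm_opp _ (vadd x (vopp q))), voppD, voppK in H.
    apply (Rle_trans _ _ _ H), Rmax_lub.
    + pose proof (Rmax_r (d x) (d (vopp x))); lra.
    + pose proof (Rmax_l (d x) (d (vopp x))); lra.
  - apply Rmax_lub; [apply dV_le_norm|].
    rewrite <- (vnorm_opp _ x); apply dV_le_norm.
Qed.

Lemma dV_proper (x : V) : x <> vzero -> d x <> 0 \/ d (vopp x) <> 0.
Proof.
  intro Hx.
  destruct (Req_dec (d x) 0) as [H1|H1]; [|left; exact H1].
  destruct (Req_dec (d (vopp x)) 0) as [H2|H2]; [|right; exact H2].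
  exfalso; apply Hx, vnorm_eq0.
  rewrite vnorm_max_dV, H1, H2; apply Rmax_left; lra.
Qed.

End ConeDistance.

Theorem proposition2p7 (V : NormedSpace) (Vp : V -> Prop)
  (Hcone : closed_proper_cone V Vp) (Hnormal : normal_cone V Vp) :
  proper_gauge V (dV V Vp) /\
  (forall x, Vp x <-> gauge_cone V (dV V Vp) x) /\
  (forall x, vnorm x = gauge_norm V (dV V Vp) x).
Proof.
  split; [split|split].
  - exact (dV_gauge V Vp Hcone).
  - exact (dV_proper V Vp Hcone Hnormal).
  - exact (dV_opp_eq0 V Vp Hcone).
  - exact (vnorm_max_dV V Vp Hcone Hnormal).
Qed.
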